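(* Let $d>1$. For every integer $s$ with $2\le s\le 2^d$, \[\lambda^*(d,s)\le \left(\frac{s}{s-1}\right)^{s-1}\lambda^*(d,s-1)\le e\,\lambda^*(d,s-1),\] and for every integer $s$ with $0\le s\le 2^d-2$, \[\lambda^*(d,s)\le \left(\frac{2^d-s}{2^d-s-1}\right)^{2^d-s-1}\lambda^*(d,s+1)\le e\,\lambda^*(d,s+1).\]
   Context: For integers $n\ge d\ge 1$, a $d$-flat in $\mathbb{F}_2^n$ is a set $x_0+U$ with $x_0\in\mathbb{F}_2^n$ and $U$ a $d$-dimensional linear subspace of $\mathbb{F}_2^n$. For $A\subseteq\mathbb{F}_2^n$ and an integer $0\le s\le 2^d$, $\lambda^*(n,d,s,A)$ denotes the fraction of $d$-flats $Q$ in $\mathbb{F}_2^n$ with $|Q\cap A|=s$. Let $\lambda^*(n,d,s)=\max_{A\subseteq\mathbb{F}_2^n}\lambda^*(n,d,s,A)$; this is non-increasing in $n$, and $\lambda^*(d,s)=\lim_{n\to\infty}\lambda^*(n,d,s)$. *)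

From HB Require Import structures.
From mathcomp Require Import all_boot all_order all_algebra.
From mathcomp Require Import all_classical all_reals all_analysis.
Set Implicit Arguments. Unset Strict Implicit. Unset Printing Implicit Defensive.
Import Order.TTheory GRing.Theory Num.Theory numFieldNormedType.Exports.
Local Open Scope ring_scope.

Definition is_flat (n d : nat) (Q : {set 'rV['F_2]_n}) : bool :=
  [exists x0 : 'rV['F_2]_n, exists U : 'M['F_2]_(d, n),
     (\rank U == d) && (Q == [set x | (x - x0 <= U)%MS])].

Definition flats (n d : nat) : {set {set 'rV['F_2]_n}} := [set Q | is_flat d Q].

Definition lamA (R : realType) (n d s : nat) (A : {set 'rV['F_2]_n}) : R :=
  (#|[set Q in flats n d | #|Q :&: A| == s]|)%:R / (#|flats n d|)%:R.

Definition lamN (R : realType) (n d s : nat) : R :=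
  \big[Num.max/0]_(A : {set 'rV['F_2]_n}) lamA R d s A.

Definition lam (R : realType) (d s : nat) : R := limn (fun n => lamN R n d s).

From mathcomp Require Import all_boot all_order all_algebra.
From mathcomp Require Import all_classical all_reals all_analysis.
From mathcomp Require Import zify ring.
Import Order.TTheory GRing.Theory Num.Theory numFieldNormedType.Exports.
Local Open Scope ring_scope.
Set Implicit Arguments. Unset Strict Implicit. Unset Printing Implicit Defensive.

(* Removal: fix n and A, and let B be a random subset of A keeping each point
   independently with probability p = t/(t+1).  A d-flat meeting A in t+1
   points meets B in exactly t points with probability (t+1) p^t (1-p) = p^t,
   so averaging over B gives lamA(t+1, A) p^t <= lamN(n, t).  The bound
   survives n -> oo: lamN(n, s) is nonincreasing for n >= d, because every
   d-flat of F_2^(n+1) lies in the same number of affine hyperplanes, each a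
   copy of F_2^n.  With ((t+1)/t)^t <= e this is the first chain; replacing A
   by its complement exchanges s and 2^d - s, which gives the second. *)

Section AffineFlats.
Variable F : finFieldType.

Lemma card_submx m n (K : 'M[F]_(m, n)) :
  #|[set x : 'rV[F]_n | (x <= K)%MS]| = (#|F| ^ \rank K)%N.
Proof.
pose f (u : 'rV[F]_(\rank K)) := u *m row_base K.
have inj_f : injective f := can_inj (mulmxKp (row_base_free K)).
have -> : [set x : 'rV[F]_n | (x <= K)%MS] = f @: [set: 'rV[F]_(\rank K)].
  apply/setP => x; rewrite inE; apply/idP/imsetP.
    by rewrite -(eq_row_base K) => /submxP [u ->]; exists u.
  by move=> [u _ ->]; rewrite /f -(eq_row_base K) submxMl.
by rewrite card_imset // cardsT card_mx mul1n.
Qed.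

Definition flat_of n m (x0 : 'rV[F]_n) (U : 'M[F]_(m, n)) : {set 'rV[F]_n} :=
  [set x | (x - x0 <= U)%MS].

Lemma card_flat_of n m (x0 : 'rV[F]_n) (U : 'M[F]_(m, n)) :
  #|flat_of x0 U| = (#|F| ^ \rank U)%N.
Proof.
rewrite -card_submx.
have -> : flat_of x0 U = (+%R^~ x0) @: [set x : 'rV[F]_n | (x <= U)%MS].
  apply/setP => x; rewrite inE; apply/idP/imsetP.
    by move=> h; exists (x - x0); rewrite ?inE // subrK.
  by move=> [y]; rewrite inE => hy ->; rewrite addrK.
exact/card_imset/addIr.
Qed.

Lemma imset_flat_of n r m (M : 'M[F]_(r, n)) b (y0 : 'rV[F]_r) (D : 'M[F]_(m, r)) :
  row_free M ->
  (fun y => y *m M + b) @: flat_of y0 D = flat_of (y0 *m M + b) (D *m M).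
Proof.
move=> fM; apply/setP => x; rewrite [RHS]inE; apply/imsetP/idP.
  move=> [y]; rewrite inE => hy ->.
  rewrite [X in (X <= _)%MS](_ : _ = (y - y0) *m M) ?submxMr //.
  by rewrite mulmxBl opprD addrACA subrr addr0.
move=> h; have hM : (x - (y0 *m M + b) <= M)%MS := submx_trans h (submxMl D M).
set z := (x - (y0 *m M + b)) *m pinvmx M.
have ez : z *m M = x - (y0 *m M + b) := mulmxKpV hM.
exists (y0 + z); last by rewrite mulmxDl ez addrCA opprD addNKr subrK.
by rewrite inE [y0 + z]addrC addrK -(submxMfree _ _ fM) ez.
Qed.

Definition hyperplane n (a : 'rV[F]_n) (b : F) : {set 'rV[F]_n} :=
  [set x | x *m a^T == b%:M].

Lemma flat_of_sub_hyperplane n m (x0 : 'rV[F]_n) (U : 'M[F]_(m, n)) a b :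
  (flat_of x0 U \subset hyperplane a b) = (U *m a^T == 0) && (x0 *m a^T == b%:M).
Proof.
apply/fintype.subsetP/andP => [h | [/eqP hU /eqP hx] x]; last first.
  rewrite !inE => /submxP [D e]; have -> : x = D *m U + x0 by rewrite -e subrK.
  by rewrite mulmxDl -mulmxA hU mulmx0 add0r hx.
have hx : x0 *m a^T = b%:M by have := h x0; rewrite !inE subrr sub0mx => /(_ isT) /eqP.
split; last by rewrite hx.
apply/eqP/row_matrixP => i; rewrite row0 row_mul.
have := h (x0 + row i U); rewrite !inE [x0 + _]addrC addrK row_sub => /(_ isT) /eqP.
by rewrite mulmxDl hx => /(canRL (addrK _)); rewrite subrr.
Qed.

Lemma scalar_mx11_eq (b : F) (M : 'M[F]_1) : (b%:M == M) = (b == M 0 0).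
Proof.
apply/eqP/eqP => [<- | ->]; first by rewrite mxE eqxx mulr1n.
by rewrite -mx11_scalar.
Qed.

Lemma count_hyperplanes_over_flat n m (x0 : 'rV[F]_n) (U : 'M[F]_(m, n)) :
  (\sum_(a : 'rV[F]_n | a != 0%R) \sum_(b : F) (flat_of x0 U \subset hyperplane a b))%N
  = (#|F| ^ (n - \rank U)).-1.
Proof.
have ker_a a : (U *m a^T == 0) = (a <= kermx U^T)%MS.
  by rewrite sub_kermx -(inj_eq (@trmx_inj _ _ _)) trmx_mul trmxK linear0.
have count_b a :
    (\sum_(b : F) (flat_of x0 U \subset hyperplane a b))%N = (a <= kermx U^T)%MS.
  rewrite -ker_a (bigD1 ((x0 *m a^T) 0 0)) //= big1 ?addn0 => [|b hb];
    rewrite flat_of_sub_hyperplane [x0 *m _ == _]eq_sym scalar_mx11_eq;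
    first by rewrite eqxx andbT.
  by rewrite (negbTE hb) andbF.
under eq_bigr => a _ do rewrite count_b.
have all_a : (\sum_(a : 'rV[F]_n) (a <= kermx U^T)%MS)%N = (#|F| ^ (n - \rank U))%N.
  rewrite -(mxrank_tr U) -mxrank_ker -card_submx -sum1dep_card [RHS]big_mkcond /=.
  by apply: eq_bigr => a _; case: (_ <= _)%MS.
by rewrite -all_a [in RHS](bigD1 0) //= sub0mx.
Qed.

Lemma hyperplane_param n (a : 'rV[F]_n.+1) be : a != 0 ->
  exists (K : 'M[F]_n.+1) (b : 'rV[F]_n.+1),
    [/\ \rank K = n, forall x : 'rV[F]_n.+1, (x <= row_base K)%MS = (x *m a^T == 0)
      & b *m a^T = be%:M].
Proof.
move=> a_neq0; have [i ai_neq0] : exists i, a 0 i != 0.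
  apply/existsP; apply: contraR a_neq0 => /existsPn a0.
  by apply/eqP/rowP => j; rewrite mxE; apply/eqP/negPn/a0.
exists (kermx a^T), ((be / a 0 i) *: delta_mx 0 i : 'rV[F]_n.+1); split.
- by rewrite mxrank_ker mxrank_tr rank_rV a_neq0 subn1.
- by move=> x; rewrite (eq_row_base (kermx a^T)) sub_kermx.
by rewrite [LHS]mx11_scalar -scalemxAl -rowE !mxE mulfVK.
Qed.

End AffineFlats.

Lemma flatsP n d (Q : {set 'rV['F_2]_n}) :
  reflect (exists x0 (U : 'M['F_2]_(d, n)), \rank U = d /\ Q = flat_of x0 U)
          (Q \in flats n d).
Proof.
rewrite inE; apply: (iffP existsP) => [[x0 /existsP [U /andP [/eqP hr /eqP ->]]]|].
  by exists x0, U.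
by move=> [x0 [U [hr ->]]]; exists x0; apply/existsP; exists U; rewrite hr eqxx; exact/eqP.
Qed.

Lemma card_flat n d Q : Q \in flats n d -> #|Q| = (2 ^ d)%N.
Proof. by case/flatsP => x0 [U [hr ->]]; rewrite card_flat_of hr card_Fp. Qed.

Lemma lamA_setC (R : realType) n d s (A : {set 'rV['F_2]_n}) : (s <= 2 ^ d)%N ->
  lamA R d s A = lamA R d (2 ^ d - s) (~: A).
Proof.
move=> le_s; rewrite /lamA; congr (_%:R / _); apply: eq_card => Q; rewrite !inE.
case flatQ: (is_flat d Q) => //=.
have cardQ : #|Q| = (2 ^ d)%N by apply: card_flat; rewrite inE.
have : (#|Q :&: A| <= #|Q|)%N by rewrite subset_leq_card ?subsetIl.
rewrite -finset.setDE cardsD cardQ; move: (#|Q :&: A|) (2 ^ d)%N le_s => k N.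
by move=> le_s le_k; apply/eqP/eqP; lia.
Qed.

Lemma lamN_setC (R : realType) n d s : (s <= 2 ^ d)%N ->
  lamN R n d s = lamN R n d (2 ^ d - s).
Proof.
move=> le_s; rewrite /lamN (reindex_inj (@finset.setC_inj _)) /=.
by apply: eq_bigr => A _; rewrite (lamA_setC R _ le_s) finset.setCK.
Qed.

Lemma lam_setC (R : realType) d s : (s <= 2 ^ d)%N ->
  lam R d s = lam R d (2 ^ d - s).
Proof. by move=> le_s; rewrite /lam (funext (fun n => lamN_setC R n le_s)). Qed.

Lemma card_set_in_sum (T : finType) (P : {set T}) (C : pred T) :
  #|[set x in P | C x]| = (\sum_(x in P) C x)%N.
Proof.
rewrite -sum1_card [RHS]big_mkcond [LHS]big_mkcond /=; apply: eq_bigr => x _.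
by rewrite !inE; case: (x \in P); case: (C x).
Qed.

Section RandomSubset.
Variables (R : numDomainType) (T : finType).
Implicit Types (A B Q S C X : {set T}) (p : R).

(* The probability that a random subset of [A], keeping each point
   independently with probability [p], equals [B]. *)
Definition subset_weight p A B : R :=
  \prod_x (if x \in B then (if x \in A then p else 0)
           else (if x \in A then 1 - p else 1)).

Lemma subset_weight_ge0 p A B : 0 <= p <= 1 -> 0 <= subset_weight p A B.
Proof.
move=> /andP [p0 p1]; apply: prodr_ge0 => x _.
by do 2 case: ifP => _ //; rewrite subr_ge0.
Qed.

Lemma sum_subset_weight p A : \sum_B subset_weight p A B = 1.
Proof.
rewrite /subset_weight -(@bigA_distr R 0 1 *%R +%R T (fun x => if x \in A then p else 0)
  (fun x => if x \in A then 1 - p else 1)).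
apply: big1 => x _ /=.
by case: ifP => _; rewrite ?add0r ?subrKC.
Qed.

Lemma prod_if_set_point C y (a b : R) : y \notin C ->
  \prod_x (if x \in C then a else if x == y then b else 1) = a ^+ #|C| * b.
Proof.
move=> yC; rewrite (bigID (mem C)) /= (eq_bigr (fun _ => a)) => [|x -> //].
rewrite prodr_const (bigD1 y) //= (negbTE yC) eqxx big1 ?mulr1 //.
by move=> x /andP [/negbTE -> /negbTE ->].
Qed.

Lemma sum_subset_weight_setD1 p A Q y : y \in Q :&: A ->
  \sum_B subset_weight p A B * (Q :&: B == (Q :&: A) :\ y)%:R
  = p ^+ #|(Q :&: A) :\ y| * (1 - p).
Proof.
move=> yS; set S := Q :&: A.
have /setIP [yQ yA] := yS.
pose F x := if (x \in Q) && (x \notin S :\ y) then 0 else if x \in A then p else 0.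
pose G x := if (x \in Q) && (x \in S :\ y) then 0 else if x \in A then 1 - p else 1.
(* Conditioning on [Q :&: B] only changes the factors at the points of [Q]. *)
transitivity (\sum_(B : {set T}) \prod_x (if x \in B then F x else G x)).
  apply: eq_bigr => B _; rewrite /subset_weight.
  have [/eqP QB | QB] := boolP (Q :&: B == S :\ y).
    rewrite mulr1; apply: eq_bigr => x _; rewrite /F /G /=.
    have [xQ | _] //= := boolP (x \in Q).
    by rewrite -QB inE xQ; case: (x \in B).
  rewrite mulr0; symmetry.
  have [x hx] : exists x, (x \in Q :&: B) != (x \in S :\ y).
    apply/existsP; apply: contraR QB => /existsPn h; apply/eqP/setP => z.
    exact/eqP/negPn/h.
  rewrite (bigD1 x) //=; apply/eqP; rewrite mulf_eq0; apply/orP; left; apply/eqP.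
  move: hx; rewrite /F /G /S !inE; case: (x \in Q) => //=;
  by rewrite ?andbF; case: (x \in B); case: (x != y); case: (x \in A).
rewrite -(@bigA_distr R 0 1 *%R +%R T F G) -(@prod_if_set_point (S :\ y) y p (1 - p)).
  apply: eq_bigr => x _; rewrite /F /G /S !inE.
  case: eqP => [-> | _] /=; first by rewrite yQ yA add0r.
  by case: (x \in Q); case: (x \in A) => /=; rewrite ?add0r ?addr0 ?subrKC.
by rewrite setD11.
Qed.

Lemma sum_indicator_setD1_le X S :
  \sum_(y in S) ((X == S :\ y)%:R : R) <= (#|X| == #|S|.-1)%:R.
Proof.
have [y0 /andP [y0S /eqP ->] | none] := pickP (fun y => (y \in S) && (X == S :\ y)).
  rewrite [#|S|](cardsD1 y0) y0S add1n eqxx (bigD1 y0) //= eqxx big1 ?addr0 //.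
  move=> y /andP [yS ny].
  apply/eqP; rewrite pnatr_eq0 eqb0; apply: contra ny => /eqP h.
  by have := setD11 y0 S; rewrite h in_setD1 y0S andbT => /negbFE /eqP ->.
by rewrite big1 ?ler0n // => y yS; have := none y; rewrite yS /= => ->.
Qed.

Lemma sum_subset_weight_card_pred_ge p A Q t : 0 <= p <= 1 -> #|Q :&: A| = t.+1 ->
  t.+1%:R * (p ^+ t * (1 - p)) <= \sum_B subset_weight p A B * (#|Q :&: B| == t)%:R.
Proof.
move=> p01 cardS; set S := Q :&: A.
have -> : t.+1%:R * (p ^+ t * (1 - p)) =
          \sum_(y in S) \sum_B subset_weight p A B * (Q :&: B == S :\ y)%:R.
  rewrite -cardS mulr_natl -sumr_const; apply: eq_bigr => y yS.
  have cardSy : #|S :\ y| = t by move: cardS; rewrite (cardsD1 y) yS => -[].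
  by rewrite sum_subset_weight_setD1 // cardSy.
rewrite exchange_big /=; apply: ler_sum => B _.
rewrite -mulr_sumr ler_wpM2l ?subset_weight_ge0 //.
by have := sum_indicator_setD1_le (Q :&: B) S; rewrite cardS.
Qed.

Lemma random_subset_removal (F : {set {set T}}) A t p : 0 <= p <= 1 ->
  (#|[set Q in F | #|Q :&: A| == t.+1]|)%:R * (t.+1%:R * (p ^+ t * (1 - p)))
  <= \sum_B subset_weight p A B * (#|[set Q in F | #|Q :&: B| == t]|)%:R.
Proof.
move=> p01.
under [X in _ <= X]eq_bigr => B _ do rewrite card_set_in_sum natr_sum mulr_sumr.
rewrite exchange_big /= card_set_in_sum natr_sum mulr_suml; apply: ler_sum => Q _.
have [/eqP cardQA | _] := boolP (#|Q :&: A| == t.+1).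
  by rewrite mul1r; apply: sum_subset_weight_card_pred_ge.
rewrite mul0r; apply: sumr_ge0 => B _.
by rewrite mulr_ge0 ?subset_weight_ge0 ?ler0n.
Qed.
End RandomSubset.

Lemma lamN_ge0 (R : realType) n d s : 0 <= lamN R n d s.
Proof. exact: bigmax_ge_id. Qed.

Lemma lamA_le_lamN (R : realType) n d s (A : {set 'rV['F_2]_n}) :
  lamA R d s A <= lamN R n d s.
Proof. exact: le_bigmax. Qed.

Lemma lamA_succ_le (R : realType) n d t (A : {set 'rV['F_2]_n}) (p : R) :
  0 <= p <= 1 ->
  lamA R d t.+1 A * (t.+1%:R * (p ^+ t * (1 - p))) <= lamN R n d t.
Proof.
move=> p01; rewrite /lamA; set N := #|flats n d|.
have [-> | N_gt0] := posnP N; first by rewrite invr0 mulr0 mul0r lamN_ge0.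
rewrite mulrAC ler_pdivrMr ?ltr0n //.
apply: le_trans (random_subset_removal (flats n d) A t p01) _.
apply: (@le_trans _ _ (\sum_B subset_weight p A B * (lamN R n d t * N%:R))).
  apply: ler_sum => B _; rewrite ler_wpM2l ?subset_weight_ge0 //.
  by rewrite -ler_pdivrMr ?ltr0n //; apply: lamA_le_lamN.
by rewrite -mulr_suml sum_subset_weight mul1r.
Qed.

Lemma lamN_succ_le (R : realType) n d t : (0 < t)%N ->
  lamN R n d t.+1 <= (t.+1%:R / t%:R) ^+ t * lamN R n d t.
Proof.
move=> t_gt0; pose p : R := t%:R / t.+1%:R.
have p_gt0 : 0 < p by rewrite divr_gt0 ?ltr0n.
have p01 : 0 <= p <= 1 by rewrite ltW //= ler_pdivrMr ?ltr0n // mul1r ler_nat.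
(* the choice of [p] maximizes [(t+1) p^t (1-p)], which then equals [p^t] *)
have opt_p : t.+1%:R * (p ^+ t * (1 - p)) = p ^+ t by rewrite /p; field.
rewrite /lamN; apply: bigmax_le => [|A _].
  by rewrite mulr_ge0 ?lamN_ge0 // exprn_ge0 // divr_ge0 ?ler0n.
rewrite -invf_div -/p exprVn mulrC ler_pdivlMr ?exprn_gt0 // -opt_p.
exact: lamA_succ_le.
Qed.

Lemma card_flats_in_hyperplane n d r (M : 'M['F_2]_(r, n)) b (a : 'rV['F_2]_n) be
    (P : pred {set 'rV['F_2]_n}) :
  row_free M -> (forall x : 'rV['F_2]_n, (x <= M)%MS = (x *m a^T == 0)) ->
  b *m a^T = be%:M ->
  #|[set Q in flats n d | (Q \subset hyperplane a be) && P Q]| =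
  #|[set Q' in flats r d | P ((fun y => y *m M + b) @: Q')]|.
Proof.
move=> fM hMa hb; set psi := fun y : 'rV['F_2]_r => y *m M + b.
have inj_psi : injective psi by move=> y1 y2 /addIr /(can_inj (mulmxKp fM)).
have Ma0 m (X : 'M['F_2]_(m, n)) : (X <= M)%MS -> X *m a^T = 0.
  move=> XM; apply/row_matrixP => i; rewrite row_mul row0; apply/eqP.
  by rewrite -hMa (submx_trans (row_sub i X) XM).
rewrite -(card_imset _ (imset_inj inj_psi)); apply: eq_card => Q; rewrite inE.
apply/andP/imsetP => [[/flatsP [x0 [U [rU ->]]] /andP []] | [Q']].
  rewrite flat_of_sub_hyperplane => /andP [/eqP Ua0 /eqP x0a] PQ.
  have x0bM : (x0 - b <= M)%MS by rewrite hMa mulmxBl x0a hb subrr.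
  have UM : (U <= M)%MS by apply/row_subP => i; rewrite hMa -row_mul Ua0 row0.
  set D := U *m pinvmx M; set y0 := (x0 - b) *m pinvmx M.
  have eQ : psi @: flat_of y0 D = flat_of x0 U.
    by rewrite imset_flat_of // (mulmxKpV UM) (mulmxKpV x0bM) subrK.
  exists (flat_of y0 D); last by rewrite eQ.
  rewrite inE eQ PQ andbT; apply/flatsP.
  by exists y0, D; split=> //; rewrite -[RHS]rU -[in RHS](mulmxKpV UM) mxrankMfree.
rewrite inE => /andP [/flatsP [y0 [D [rD ->]]] PQ'] ->; split=> //.
  apply/flatsP; exists (y0 *m M + b), (D *m M).
  by rewrite imset_flat_of // mxrankMfree.
rewrite PQ' andbT imset_flat_of // flat_of_sub_hyperplane Ma0 ?submxMl //=.
by rewrite mulmxDl Ma0 ?submxMl // add0r hb !eqxx.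
Qed.

Lemma card_flats_sub_hyperplane n d (a : 'rV['F_2]_n.+1) be : a != 0 ->
  #|[set Q in flats n.+1 d | Q \subset hyperplane a be]| = #|flats n d|.
Proof.
case/(hyperplane_param be) => K [b [rK Ka hb]].
transitivity #|[set Q in flats n.+1 d | (Q \subset hyperplane a be) && true]|.
  by apply: eq_card => Q; rewrite !inE andbT.
rewrite (card_flats_in_hyperplane d _ (row_base_free K) Ka hb) -[in RHS]rK.
by apply: eq_card => Q; rewrite inE andbT.
Qed.

Lemma card_flats_sub_hyperplane_le (R : realType) n d s (a : 'rV['F_2]_n.+1) be
    (A : {set 'rV['F_2]_n.+1}) : a != 0 ->
  (#|[set Q in flats n.+1 d | (Q \subset hyperplane a be) && (#|Q :&: A| == s)]|%:R : R)
  <= #|flats n d|%:R * lamN R n d s.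
Proof.
case/(hyperplane_param be) => K [b [rK Ka hb]].
rewrite (card_flats_in_hyperplane d _ (row_base_free K) Ka hb).
set psi := fun y : 'rV['F_2]_(\rank K) => y *m row_base K + b.
have inj_psi : injective psi.
  by move=> y1 y2 /addIr /(can_inj (mulmxKp (row_base_free K))).
have meet_pullback (Q' : {set 'rV['F_2]_(\rank K)}) :
    #|psi @: Q' :&: A| = #|Q' :&: psi @^-1: A|.
  rewrite -(card_imset _ inj_psi); apply: eq_card => x; rewrite !inE.
  apply/andP/imsetP => [[/imsetP [y yQ' ->] yA] | [y]].
    by exists y; rewrite ?inE ?yQ'.
  by rewrite !inE => /andP [yQ' yA] ->; rewrite yA mem_imset.
under eq_finset => Q' do rewrite meet_pullback.
set k := #|[set Q' in flats _ d | _]|.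
have le_k : (k <= #|flats (\rank K) d|)%N.
  by apply/subset_leq_card/fintype.subsetP => Q; rewrite inE => /andP [].
have := lamA_le_lamN R d s (psi @^-1: A); rewrite /lamA -/k.
clearbody k; rewrite rK in le_k *.
have [N0 | N_gt0] := posnP #|flats n d|.
  by move: le_k; rewrite N0 leqn0 => /eqP -> _; rewrite !mul0r.
by rewrite ler_pdivrMr ?ltr0n // mulrC.
Qed.

Lemma sum_card_flats_sub_hyperplanes n d (P : pred {set 'rV['F_2]_n.+1}) :
  (\sum_(a : 'rV['F_2]_n.+1 | a != 0%R) \sum_(b : 'F_2)
     #|[set Q in flats n.+1 d | (Q \subset hyperplane a b) && P Q]|)%N
  = ((2 ^ (n.+1 - d)).-1 * #|[set Q in flats n.+1 d | P Q]|)%N.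
Proof.
under eq_bigr => a _ do under eq_bigr => b _ do rewrite card_set_in_sum.
rewrite card_set_in_sum big_distrr /=.
under eq_bigr => a _ do rewrite exchange_big /=.
rewrite exchange_big /=; apply: eq_bigr => Q /flatsP [x0 [U [rU ->]]].
have [_ | _] := boolP (P _); last first.
  by rewrite muln0 big1 // => a _; rewrite big1 // => b _; rewrite andbF.
under eq_bigr => a _ do under eq_bigr => b _ do rewrite andbT.
by rewrite count_hyperplanes_over_flat rU card_Fp // muln1.
Qed.

Lemma lamN_nonincreasing (R : realType) n d s : (d <= n)%N ->
  lamN R n.+1 d s <= lamN R n d s.
Proof.
move=> le_dn; rewrite {1}/lamN; apply: bigmax_le => [|A _]; first exact: lamN_ge0.
set c := (2 ^ (n.+1 - d)).-1; set N := #|flats n.+1 d|.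
set k := #|[set Q in flats n.+1 d | #|Q :&: A| == s]|.
have c_gt0 : (0 < c)%N.
  by rewrite /c -subn1 subn_gt0 -[1%N](expn0 2) ltn_exp2l // subn_gt0 ltnS.
have count_all := sum_card_flats_sub_hyperplanes (n := n) d (fun=> true).
have count_s := sum_card_flats_sub_hyperplanes d (fun Q => #|Q :&: A| == s).
have cardN : [set Q in flats n.+1 d | true] = flats n.+1 d.
  by apply/finset.setP => Q; rewrite inE andbT.
rewrite /= cardN -/c -/N in count_all; rewrite -/c -/k in count_s.
(* every d-flat lies in exactly [c] affine hyperplanes, each a copy of [F_2^n] *)
have ck_le : c%:R * k%:R <= (c * N)%:R * lamN R n d s :> R.
  rewrite -natrM -count_s -count_all !natr_sum mulr_suml.
  apply: ler_sum => a a_neq0; rewrite !natr_sum mulr_suml; apply: ler_sum => b _.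
  have -> : [set Q in flats n.+1 d | (Q \subset hyperplane a b) && true] =
            [set Q in flats n.+1 d | Q \subset hyperplane a b].
    by apply/finset.setP => Q; rewrite !inE andbT.
  by rewrite card_flats_sub_hyperplane // card_flats_sub_hyperplane_le.
rewrite /lamA -/N -/k; have [-> | N_gt0] := posnP N; first by rewrite invr0 mulr0 lamN_ge0.
by rewrite ler_pdivrMr ?ltr0n // mulrC; rewrite natrM -mulrA ler_pM2l ?ltr0n in ck_le.
Qed.

Lemma lamN_cvgn (R : realType) d s : cvgn (fun n => lamN R n d s).
Proof.
apply: (@near_nonincreasing_is_cvgn _ _ 0); last by apply: nearW => n; exact: lamN_ge0.
exists d => // i /= le_di j; elim: j => [|j IHj]; first by rewrite leqn0 => /eqP ->.
rewrite leq_eqVlt ltnS => /predU1P [-> // | le_ij].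
exact: le_trans (@lamN_nonincreasing R j d s (leq_trans le_di le_ij)) (IHj le_ij).
Qed.

Lemma limn_le_scale (R : realType) (u v : R ^nat) (k : R) :
  cvgn u -> cvgn v -> (forall n, u n <= k * v n) -> limn u <= k * limn v.
Proof.
move=> cu cv le_uv.
by apply: (ler_cvg_to cu (cvgM (cvg_cst k) cv)); apply: nearW.
Qed.

Lemma lam_le_scale (R : realType) d s s' (k : R) :
  (forall n, lamN R n d s <= k * lamN R n d s') -> lam R d s <= k * lam R d s'.
Proof. by apply: limn_le_scale; apply: lamN_cvgn. Qed.

Lemma lam_ge0 (R : realType) d s : 0 <= lam R d s.
Proof.
by apply: limr_ge; [exact: lamN_cvgn | apply: nearW => n; exact: lamN_ge0].
Qed.

Lemma pow_succ_div_le_expR1 (R : realType) t : (0 < t)%N ->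
  (t.+1%:R / t%:R) ^+ t <= expR 1 :> R.
Proof.
move=> t_gt0; have t_neq0 : t%:R != 0 :> R by rewrite pnatr_eq0 -lt0n.
have -> : t.+1%:R / t%:R = 1 + t%:R^-1 :> R.
  by rewrite -[t.+1]addn1 natrD mulrDl mulfV // mul1r.
have -> : expR 1 = expR (t%:R^-1) ^+ t :> R by rewrite -expRM_natl mulfV.
apply: lerXn2r; rewrite ?nnegrE ?addr_ge0 ?invr_ge0 ?ler0n ?expR_ge0 //.
exact: expR_ge1Dx.
Qed.

Unset Implicit Arguments.

Theorem theorem1p5 (R : realType) (d : nat) (hd : (1 < d)%N) :
  (forall s : nat, (2 <= s <= 2 ^ d)%N ->
     lam R d s <= (s%:R / s.-1%:R) ^+ s.-1 * lam R d s.-1 /\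
     (s%:R / s.-1%:R) ^+ s.-1 * lam R d s.-1 <= expR 1 * lam R d s.-1) /\
  (forall s : nat, (s <= 2 ^ d - 2)%N ->
     lam R d s <= ((2 ^ d - s)%:R / (2 ^ d - s).-1%:R) ^+ (2 ^ d - s).-1
                    * lam R d s.+1 /\
     ((2 ^ d - s)%:R / (2 ^ d - s).-1%:R) ^+ (2 ^ d - s).-1 * lam R d s.+1
       <= expR 1 * lam R d s.+1).
Proof.
have removal_chain s : (2 <= s <= 2 ^ d)%N ->
    lam R d s <= (s%:R / s.-1%:R) ^+ s.-1 * lam R d s.-1 /\
    (s%:R / s.-1%:R) ^+ s.-1 * lam R d s.-1 <= expR 1 * lam R d s.-1.
  case: s => [|t] // /andP [t_gt0 _] /=; split.
    by apply: lam_le_scale => n; apply: lamN_succ_le.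
  by rewrite ler_wpM2r ?lam_ge0 ?pow_succ_div_le_expR1.
split=> // s le_s.
have two_le_pow : (2 <= 2 ^ d)%N by rewrite -[2%N]expn1 leq_exp2l // ltnW.
have [le_s_pow le_Ss_pow] : (s <= 2 ^ d)%N /\ (s.+1 <= 2 ^ d)%N by lia.
rewrite (lam_setC R le_s_pow) (lam_setC R le_Ss_pow) subnS.
apply: removal_chain; lia.
Qed.
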